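(* Let $p\ge2$ be an integer and let $G$ be a graph with $\mathrm{girth}(G)\ge 2p-1$. Then $G$ is $p$-path degenerate if and only if $G$ does not contain a subgraph $H$ that is a $\le(p-2)$-subdivision of a simple graph with minimum degree at least $3$.
   Context: Graphs are finite and simple; the girth is the length of a shortest cycle ($+\infty$ for forests). A $\le k$-subdivision of a graph $F$ is a graph obtained from $F$ by replacing each edge by a path of length at most $k+1$ (i.e. subdividing each edge at most $k$ times), these paths being internally disjoint. A strict ear of a graph $G$ is a path of $G$ whose internal vertices all have degree $2$ in $G$ and whose two endpoints are distinct. For an integer $p\ge1$, a $p$-reduction of $G$ is the deletion of either an isolated vertex, or a vertex of degree $1$, or the internal vertices of a strict ear of $G$ of length at least $p$. A graph is $p$-path degenerate if it can be reduced to the empty graph by a sequence of $p$-reductions. *)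

From mathcomp Require Import all_boot.
Set Implicit Arguments. Unset Strict Implicit. Unset Printing Implicit Defensive.

Section Graphs.
Variables (T : finType) (e : rel T).

Definition simple_graph : Prop := irreflexive e /\ symmetric e.

(* girth(G) >= g : every cycle (>= 3 distinct vertices, cyclically adjacent)
   has length >= g.  Forests satisfy this for every g. *)
Definition girth_ge (g : nat) : Prop :=
  forall c : seq T, uniq c -> 3 <= size c -> cycle e c -> g <= size c.

Definition deg_in (V : {set T}) (x : T) : nat := #|[set y in V | e x y]|.

(* a strict ear of G[V]: path x, mid..., y of distinct vertices of V,
   x <> y, all internal vertices of degree 2 in G[V]; length = size mid + 1 *)
Definition strict_ear (V : {set T}) (x : T) (mid : seq T) (y : T) : Prop :=
  [/\ x \in V, y \in V & all (fun z => z \in V) mid] /\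
  [/\ uniq (x :: mid ++ [:: y]), path e x (mid ++ [:: y]) &
      all (fun z => deg_in V z == 2) mid].

Inductive p_reduction (p : nat) (V : {set T}) : {set T} -> Prop :=
| red_low_deg x : x \in V -> deg_in V x <= 1 -> p_reduction p V (V :\ x)
| red_ear x mid y : strict_ear V x mid y -> p <= (size mid).+1 ->
    p_reduction p V (V :\: [set z | z \in mid]).

Inductive reduces_to_empty (p : nat) : {set T} -> Prop :=
| rte_nil : reduces_to_empty p set0
| rte_step V V' : p_reduction p V V' -> reduces_to_empty p V' ->
    reduces_to_empty p V.

Definition path_degenerate (p : nat) : Prop := reduces_to_empty p [set: T].

(* G contains a subgraph which is a <= k-subdivision of a (nonempty) simple
   graph F with minimum degree >= 3.  F has vertex set B (branch vertices,
   a subset of the vertices of G) and adjacency f; each edge uv of F is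
   replaced by the G-path u, P u v, v with at most k internal vertices;
   P v u is the reverse path; internal vertices avoid B and the paths of
   distinct edges are internally disjoint. *)
Definition has_subdivision_mindeg3 (k : nat) : Prop :=
  exists (B : {set T}) (f : rel T) (P : T -> T -> seq T),
    [/\ B != set0,
        ((forall u, ~~ f u u) /\ (forall u v, f u v = f v u)),
        (forall u v, f u v -> u \in B /\ v \in B),
        (forall u, u \in B -> 3 <= #|[set v in B | f u v]|) &
        ((forall u v, f u v ->
           [/\ P v u = rev (P u v), size (P u v) <= k,
               uniq (u :: P u v ++ [:: v]), path e u (P u v ++ [:: v]) &
               all (fun z => z \notin B) (P u v)]) /\
        (forall u v u' v', f u v -> f u' v' ->
           [set u; v] != [set u'; v'] -> [disjoint P u v & P u' v']))].

End Graphs.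

(* A subdivision H of a graph of minimum degree 3 with branch paths of at most
   p - 2 inner vertices survives every p-reduction: its branch vertices keep
   degree >= 3 and its inner vertices degree >= 2, so no vertex of H has degree
   <= 1, and a strict ear through an inner vertex of H stays inside one branch
   path, hence is too short to be removed.  Conversely, a graph that is not
   p-path degenerate has a nonempty irreducible vertex set V: G[V] has minimum
   degree 2 and all its strict ears are shorter than p.  Suppressing the
   degree-2 vertices of G[V] one by one then yields the forbidden subdivision;
   the girth bound guarantees that the two ends of a suppressed vertex are never
   already adjacent, since that would close a cycle of length <= 2p - 2. *)

From mathcomp Require Import all_boot zify.
From Stdlib Require Import Classical.

Set Implicit Arguments. Unset Strict Implicit. Unset Printing Implicit Defensive.

Section Paths.
Variables (T : eqType) (e : rel T).

Lemma path_invariant (Q : pred T) x s : path e x s ->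
  {in s &, forall a b, e a b -> Q a = Q b} -> {in s &, forall a b, Q a = Q b}.
Proof.
elim: s x => [|c s IH] x //= /andP[_ Ps] HQ.
have HQs : {in s &, forall a b, e a b -> Q a = Q b}.
  by move=> a b a_s b_s; apply: HQ; rewrite inE ?a_s ?b_s orbT.
have Qs := IH c Ps HQs.
have Qc : {in s, forall b, Q c = Q b}.
  case: s Ps {IH HQs} HQ Qs => [//|d s] /= /andP[ecd _] HQ Qs b b_s.
  rewrite (HQ c d) ?inE ?eqxx ?orbT //; exact: Qs (mem_head _ _) b_s.
move=> a b; rewrite !inE => /predU1P[->|a_s] /predU1P[->|b_s] //.
- exact: Qc.
- by rewrite (Qc a a_s).
- exact: Qs.
Qed.

Lemma uniq_rev_ends (x : T) s y : uniq (x :: s ++ [:: y]) -> uniq (y :: rev s ++ [:: x]).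
Proof.
have -> : y :: rev s ++ [:: x] = rev (x :: s ++ [:: y]) by rewrite rev_cons rev_cat cats1.
by rewrite rev_uniq.
Qed.

Hypothesis se : symmetric e.

Lemma path_rev_ends x s y : path e x (s ++ [:: y]) -> path e y (rev s ++ [:: x]).
Proof.
have := rev_path e x (rcons s y); rewrite last_rcons belast_rcons rev_cons.
by rewrite -!cats1 => ->; rewrite (@eq_path _ _ e) // => a b; rewrite se.
Qed.

Lemma inner_neighbours x s y z : uniq (x :: s ++ [:: y]) ->
  path e x (s ++ [:: y]) -> z \in s ->
  exists a b, [/\ a != b, e z a, e z b & {subset [:: a; b] <= x :: s ++ [:: y]}].
Proof.
move=> U Ps zs; case/splitPr: zs U Ps => s1 s2 U Ps.
exists (last x s1), (head y s2).
move: Ps; rewrite -catA cat_path /= => /and3P[_ eaz Pz].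
split.
- move: U; rewrite -catA -cat_cons cat_uniq => /and3P[_ /hasPn/(_ (head y s2)) H _].
  have hd : head y s2 \in z :: s2 ++ [:: y].
    by case: (s2) => /= [|c t]; rewrite !inE eqxx ?orbT.
  by apply: contraNneq (H hd) => <-; apply: mem_last.
- by rewrite se.
- by case: (s2) Pz => /= [|c t] /andP[].
move=> w; rewrite !inE => /orP[]/eqP->.
- by move: (mem_last x s1); rewrite !(inE, mem_cat) => /orP[->|->]; rewrite ?orbT.
- by case: (s2) => /= [|c t]; rewrite !(mem_cat, inE) eqxx !orbT.
Qed.

End Paths.

Section Subdivision.
Variables (T : finType) (e : rel T).

Definition branch_path (k : nat) (B : {set T}) (u : T) (s : seq T) (v : T) :=
  [/\ size s <= k, uniq (u :: s ++ [:: v]), path e u (s ++ [:: v]) & [disjoint s & B]].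

Definition subdivision (k : nat) (B : {set T}) (f : rel T) (P : T -> T -> seq T) :=
  [/\ irreflexive f, symmetric f, (forall u v, f u v -> u \in B),
      (forall u v, f u v -> P v u = rev (P u v) /\ branch_path k B u (P u v) v) &
      (forall u v u' v', f u v -> f u' v' ->
         [set u; v] != [set u'; v'] -> [disjoint P u v & P u' v'])].

Lemma has_subdivisionP k : has_subdivision_mindeg3 e k <->
  exists B f P, [/\ B != set0, subdivision k B f P & forall u, u \in B -> 2 < deg_in f B u].
Proof.
rewrite /has_subdivision_mindeg3 /subdivision; split.
- move=> [B [f [P [B0 [fi fs] fB deg3 [Pp Pd]]]]]; exists B, f, P; split=> //.
  split=> // [u|u v /fB[]//|u v /Pp[-> Psz PU Ppath PB]]; first exact: negbTE.
  by split=> //; split=> //; rewrite disjoint_has -all_predC.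
- move=> [B [f [P [B0 [fi fs fB Pp Pd] deg3]]]]; exists B, f, P; split=> //.
  + by split=> // u; rewrite fi.
  + by move=> u v fuv; split; [exact: fB fuv | apply: (fB v u); rewrite fs].
  + split=> // u v /Pp[-> [Psz PU Ppath PB]]; split=> //.
    by rewrite all_predC -disjoint_has.
Qed.

Lemma branch_path_rev k B u s v : symmetric e ->
  branch_path k B u s v -> branch_path k B v (rev s) u.
Proof.
move=> se [sz U Ps D]; split.
- by rewrite size_rev.
- exact: uniq_rev_ends.
- exact: path_rev_ends.
- by rewrite disjoint_has has_rev -disjoint_has.
Qed.

Lemma branch_pathW k (B B' : {set T}) u s v : B' \subset B ->
  branch_path k B u s v -> branch_path k B' u s v.
Proof. by move=> sB [sz U Ps D]; split=> //; apply: disjointWr D. Qed.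

Lemma girth_two_paths g a b s t : girth_ge e g ->
  uniq (a :: s ++ [:: b]) -> uniq (b :: t ++ [:: a]) -> [disjoint s & t] ->
  path e a (s ++ [:: b]) -> path e b (t ++ [:: a]) -> 0 < size s + size t ->
  g <= (size s + size t).+2.
Proof.
move=> gir Us Ut st Ps Pt nontriv.
have -> : (size s + size t).+2 = size (a :: s ++ b :: t) by rewrite /= size_cat /= addnS.
apply: gir; last first.
- by rewrite /= rcons_cat /= -cats1 -cat1s catA cat_path Ps last_cat /= cats1 -cats1.
- by rewrite /= size_cat /= addnS !ltnS.
rewrite -cat_cons cat_uniq in Us; rewrite -cat_cons cat_uniq in Ut.
move: Us Ut => /and3P[Ua /norP[bas _] _] /and3P[Ub /norP[abt _] _].
rewrite -cat_cons cat_uniq Ua Ub andbT /= negb_or bas.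
apply/hasPn => w wt; rewrite inE negb_or (disjointFl st wt) andbT.
by apply: contraNneq abt => <-; rewrite inE wt orbT.
Qed.

Lemma set2_neq (x y x' y' w : T) :
  w \in [set x; y] -> w \notin [set x'; y'] -> [set x; y] != [set x'; y'].
Proof. by move=> wxy; apply: contraNneq => <-. Qed.

End Subdivision.

Section Covering.
Variables (T : finType) (e : rel T) (p k : nat).
Variables (B : {set T}) (f : rel T) (P : T -> T -> seq T).
Hypotheses (se : symmetric e) (sub : subdivision e k B f P)
  (deg3 : forall u, u \in B -> 2 < deg_in f B u).

Definition subdivision_vertex (h : T) :=
  h \in B \/ exists u v, f u v /\ h \in P u v.

Definition covers (V : {set T}) := forall h, subdivision_vertex h -> h \in V.

Lemma covers_path V u v : covers V -> f u v -> {subset u :: P u v ++ [:: v] <= V}.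
Proof.
have [_ fs fB _ _] := sub; move=> HV fuv w.
rewrite inE mem_cat inE => /or3P[/eqP->|wP|/eqP->]; apply: HV.
- by left; exact: fB fuv.
- by right; exists u, v.
- by left; apply: (fB v u); rewrite fs.
Qed.

Lemma disjoint_paths_from u w1 w2 : f u w1 -> f u w2 -> w1 != w2 ->
  [disjoint P u w1 ++ [:: w1] & P u w2 ++ [:: w2]].
Proof.
have [fi fs fB Pp Pd] := sub; move=> fu1 fu2 w12.
have B1 : w1 \in B by apply: (fB w1 u); rewrite fs.
have B2 : w2 \in B by apply: (fB w2 u); rewrite fs.
have [_ [_ _ _ PB1]] := Pp _ _ fu1; have [_ [_ _ _ PB2]] := Pp _ _ fu2.
have uw1 : u != w1 by apply: contraTneq fu1 => <-; rewrite fi.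
have P12 : [disjoint P u w1 & P u w2].
  apply: Pd fu1 fu2 _; apply: (@set2_neq _ _ _ _ _ w1); rewrite !inE ?eqxx ?orbT //.
  by rewrite negb_or eq_sym uw1.
rewrite disjoint_has; apply/hasPn => w; rewrite /= !mem_cat !inE.
case/orP=> [wP1|/eqP->]; apply/norP; split.
- exact/negbT/(disjointFr P12).
- by apply: contraTneq wP1 => ->; rewrite (disjointFl PB1 B2).
- exact/negbT/(disjointFl PB2 B1).
- exact: w12.
Qed.

Lemma deg_branch V u : covers V -> u \in B -> 2 < deg_in e V u.
Proof.
move=> HV uB; apply: leq_trans (deg3 uB) _.
(* distinct branch paths leave u through distinct neighbours *)
pose first_step w := head w (P u w).
have first_stepP w : first_step w \in P u w ++ [:: w].
  by rewrite /first_step; case: (P u w) => [|c s]; rewrite /= inE eqxx.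
have sub_nbrs : first_step @: [set w in B | f u w] \subset [set y in V | e u y].
  apply/subsetP => y /imsetP[w]; rewrite inE => /andP[_ fuw] ->.
  have [_ _ _ Pp _] := sub; have [_ [_ _ Ppath _]] := Pp _ _ fuw.
  rewrite inE (covers_path HV fuw); last by rewrite inE first_stepP orbT.
  by move: Ppath; rewrite /first_step; case: (P u w) => [|c s] /= /andP[].
apply: leq_trans (subset_leq_card sub_nbrs); rewrite card_in_imset // => w1 w2.
rewrite !inE => /andP[_ fu1] /andP[_ fu2] eq12; apply/eqP; apply: contraT => w12.
have := disjointFr (disjoint_paths_from fu1 fu2 w12) (first_stepP w1).
by rewrite eq12 first_stepP.
Qed.

Lemma inner_nbrs_on_path u v z : f u v -> z \in P u v ->
  exists a b, [/\ a != b, e z a, e z b & {subset [:: a; b] <= u :: P u v ++ [:: v]}].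
Proof.
have [_ _ _ Pp _] := sub; move=> fuv; have [_ [_ U Ppath _]] := Pp _ _ fuv.
move=> zP; have [a [b [ab eza ezb abP]]] := inner_neighbours se U Ppath zP.
by exists a, b.
Qed.

Lemma deg_inner V u v z : covers V -> f u v -> z \in P u v -> 1 < deg_in e V z.
Proof.
move=> HV fuv /(inner_nbrs_on_path fuv)[a [b [ab eza ezb abP]]].
have <- : #|[set a; b]| = 2 by rewrite cards2 ab.
apply/subset_leq_card/subsetP => w; rewrite !inE => /orP[]/eqP->;
  rewrite ?eza ?ezb andbT; apply: (covers_path HV fuv); apply: abP;
  by rewrite !inE eqxx ?orbT.
Qed.

Lemma deg_subdivision_vertex V h : covers V -> subdivision_vertex h -> 1 < deg_in e V h.
Proof.
move=> HV [hB|[u [v [fuv hP]]]]; last exact: deg_inner HV fuv hP.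
exact: ltnW (deg_branch HV hB).
Qed.

Lemma deg2_nbr_on_path V u v z w : covers V -> f u v -> z \in P u v -> w \in V ->
  e z w -> deg_in e V z = 2 -> deg_in e V w = 2 -> w \in P u v.
Proof.
have [_ fs fB _ _] := sub.
move=> HV fuv /(inner_nbrs_on_path fuv)[a [b [ab eza ezb abP]]] wV ezw dz dw.
have nbrs : [set a; b] = [set y in V | e z y].
  apply/eqP; rewrite eqEcard cards2 ab -dz leqnn andbT.
  apply/subsetP => y; rewrite !inE => /orP[]/eqP->; rewrite ?eza ?ezb andbT;
    apply: (covers_path HV fuv); apply: abP; by rewrite !inE eqxx ?orbT.
have : w \in u :: P u v ++ [:: v].
  apply: abP; have : w \in [set y in V | e z y] by rewrite inE wV ezw.
  by rewrite -nbrs !inE.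
rewrite inE mem_cat inE => /or3P[/eqP wu|//|/eqP wv].
- by have := deg_branch HV (fB u v fuv); rewrite -wu dw.
- have vB : v \in B by apply: (fB v u); rewrite fs.
  by have := deg_branch HV vB; rewrite -wv dw.
Qed.

Lemma ear_within_path V x mid y u v z : covers V -> strict_ear e V x mid y ->
  f u v -> z \in mid -> z \in P u v -> {subset mid <= P u v}.
Proof.
move=> HV [[_ _ /allP midV] [_ Pm /allP mid2]] fuv zm zP w wm.
have Pmid : path e x mid by move: Pm; rewrite cat_path => /andP[].
have step a b : a \in mid -> b \in mid -> e a b -> a \in P u v -> b \in P u v.
  move=> am bm eab aP; apply: (deg2_nbr_on_path HV fuv aP (midV b bm) eab);
  exact/eqP/mid2.
have inv := path_invariant (Q := fun w => w \in P u v) Pmid.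
rewrite -(inv _ z w zm wm) // => a b am bm eab.
by apply/idP/idP; apply: step => //; rewrite se.
Qed.

Hypothesis short_paths : k.+1 < p.

Lemma covers_reduction V V' : p_reduction e p V V' -> covers V -> covers V'.
Proof.
move=> red HV h hsub; have dh := deg_subdivision_vertex HV hsub.
case: red => [x xV dx | x mid y E long_ear].
  by rewrite !inE (HV h hsub) andbT; apply: contraTneq dh => ->; rewrite -leqNgt.
rewrite !inE (HV h hsub) andbT; apply/negP => hm.
have [[_ _ _] [U _ /allP mid2]] := E.
have dh2 : deg_in e V h = 2 by apply/eqP/mid2.
case: hsub => [hB|[u [v [fuv hP]]]]; first by have := deg_branch HV hB; rewrite dh2.
have [_ _ _ Pp _] := sub; have [_ [Psz _ _ _]] := Pp _ _ fuv.
have Umid : uniq mid by move: U; rewrite /= cat_uniq => /andP[_ /andP[]].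
have mid_le_k : size mid <= k.
  exact: leq_trans (uniq_leq_size Umid (ear_within_path HV E fuv hm hP)) Psz.
by move: short_paths; rewrite ltnNge (leq_trans long_ear).
Qed.

Lemma not_reduces_to_empty V : reduces_to_empty e p V -> covers V -> B != set0 -> False.
Proof.
elim=> [|V1 V2 red _ IH] HV; last by apply: IH; exact: covers_reduction red HV.
by case/set0Pn => b bB; have := HV b (or_introl bB); rewrite inE.
Qed.

End Covering.

Definition merged_path (T : eqType) (P : T -> T -> seq T) (z a b : T) :=
  P a z ++ z :: P z b.

(* Suppressing the branch vertex z with the two neighbours a and b replaces the
   edges az and zb by a single edge ab, realised by [merged_path P z a b]. *)
Definition smooth_rel (T : eqType) (f : rel T) (z a b : T) : rel T :=
  fun x y => [|| (x, y) == (a, b), (x, y) == (b, a) | [&& f x y, x != z & y != z]].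

Definition smooth_paths (T : eqType) (P : T -> T -> seq T) (z a b : T) x y :=
  if (x, y) == (a, b) then merged_path P z a b
  else if (x, y) == (b, a) then rev (merged_path P z a b) else P x y.

Section Smoothing.
Variables (T : finType) (e : rel T) (k : nat).
Variables (B : {set T}) (f : rel T) (P : T -> T -> seq T) (z a b : T).
Hypotheses (se : symmetric e) (sub : subdivision e k B f P) (zB : z \in B)
  (Nz : [set v in B | f z v] = [set a; b]) (ab : a != b).

Local Notation Q := (merged_path P z a b).

Lemma smoothing_nbrs :
  [/\ f a z, f z b, a \in B, b \in B & forall w, f z w -> w \in [set a; b]].
Proof.
have [_ fs fB _ _] := sub.
have : a \in [set v in B | f z v] by rewrite Nz !inE eqxx.
have : b \in [set v in B | f z v] by rewrite Nz !inE eqxx orbT.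
rewrite !inE => /andP[bB fzb] /andP[aB fza]; split=> //; first by rewrite fs.
by move=> w fzw; rewrite -Nz inE fzw andbT; apply: (fB w z); rewrite fs.
Qed.

Lemma smoothing_ends_neq : a != z /\ b != z.
Proof.
have [fi _ _ _ _] := sub; have [faz fzb _ _ _] := smoothing_nbrs.
by split; [apply: contraTneq faz | apply: contraTneq fzb] => ->; rewrite fi.
Qed.

Lemma merged_parts_disjoint : [disjoint P a z & P z b].
Proof.
have [_ _ _ _ Pd] := sub; have [faz fzb _ _ _] := smoothing_nbrs.
have [az _] := smoothing_ends_neq.
apply: Pd faz fzb _; apply: (@set2_neq _ _ _ _ _ a); rewrite !inE ?eqxx //.
by rewrite negb_or az ab.
Qed.

Lemma merged_uniq : uniq (a :: Q ++ [:: b]).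
Proof.
have [_ _ _ Pp _] := sub; have [faz fzb aB bB _] := smoothing_nbrs.
have [_ [_ Uaz _ aB']] := Pp a z faz.
have [_ [_ Uzb _ bB']] := Pp z b fzb.
rewrite /merged_path -catA -cat_cons cat_uniq Uzb andbT.
move: Uaz; rewrite -cat_cons cat_uniq /= orbF andbT => /andP[-> zaP].
rewrite /= (negbTE zaP) /=; apply/hasPn => w; rewrite mem_cat inE => /orP[wP|/eqP->].
- rewrite inE (disjointFl merged_parts_disjoint wP) orbF.
  by apply: contraTneq wP => ->; rewrite (disjointFl bB' aB).
- by rewrite inE (disjointFl aB' bB) orbF eq_sym.
Qed.

Lemma path_merged : path e a (Q ++ [:: b]).
Proof.
have [_ _ _ Pp _] := sub; have [faz fzb _ _ _] := smoothing_nbrs.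
have [_ [_ _ Paz _]] := Pp a z faz.
have [_ [_ _ Pzb _]] := Pp z b fzb.
move: Paz Pzb; rewrite /merged_path -catA !cat_path /= !andbT.
by move=> /andP[-> ->] /andP[-> ->].
Qed.

Lemma merged_disjoint x y : f x y -> x != z -> y != z -> [disjoint Q & P x y].
Proof.
have [_ _ _ Pp Pd] := sub; have [faz fzb _ _ _] := smoothing_nbrs.
move=> fxy xz yz; have [_ [_ _ _ PB]] := Pp x y fxy.
have zxy : z \notin [set x; y] by rewrite !inE negb_or !(eq_sym z) xz yz.
rewrite disjoint_cat disjoint_cons (disjointFl PB zB) /=.
by apply/andP; split; [apply: Pd faz fxy _ | apply: Pd fzb fxy _];
  apply: (@set2_neq _ _ _ _ _ z) => //; rewrite !inE eqxx ?orbT.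
Qed.

Hypotheses (nfab : ~~ f a b) (short : size Q <= k).

Local Notation f' := (smooth_rel f z a b).
Local Notation P' := (smooth_paths P z a b).

Lemma smooth_relP x y : f' x y ->
  [\/ (x, y) = (a, b), (x, y) = (b, a) |
     [/\ f x y, x != z, y != z, P' x y = P x y & P' y x = P y x]].
Proof.
have [_ fs _ _ _] := sub.
rewrite /smooth_rel => /or3P[/eqP->|/eqP->|/and3P[fxy xz yz]]; [by constructor..|].
have nfba : ~~ f b a by rewrite fs.
have fyx : f y x by rewrite fs.
have not_new u v : f u v -> ((u, v) == (a, b)) = false /\ ((u, v) == (b, a)) = false.
  by move=> fuv; split; apply/negbTE; apply: contraTneq fuv => -[-> ->].
have [xy1 xy2] := not_new x y fxy; have [yx1 yx2] := not_new y x fyx.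
by constructor 3; rewrite /smooth_paths ?xy1 ?xy2 ?yx1 ?yx2.
Qed.

Lemma merged_branch_path : branch_path e k (B :\ z) a Q b.
Proof.
have [_ _ _ Pp _] := sub; have [faz fzb _ _ _] := smoothing_nbrs.
have [_ [_ _ _ Paz]] := Pp a z faz.
have [_ [_ _ _ Pzb]] := Pp z b fzb.
split=> //; [exact: merged_uniq | exact: path_merged |].
rewrite disjoint_cat disjoint_cons !inE eqxx /=.
by rewrite !(disjointWr (subsetDl B [set z])).
Qed.

Lemma smooth_rel_cases x y : f' x y ->
  ([set x; y] = [set a; b] /\ P' x y =i Q) \/ [/\ f x y, x != z, y != z & P' x y = P x y].
Proof.
have Pba : P' b a = rev Q by rewrite /smooth_paths xpair_eqE eq_sym (negbTE ab) /= !eqxx.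
case/smooth_relP=> [[-> ->]|[-> ->]|[fxy xz yz Pxy _]]; [left..|by right].
- by rewrite /smooth_paths eqxx.
- by split=> [|w]; [rewrite setUC | rewrite Pba mem_rev].
Qed.

Lemma smooth_subdivision : subdivision e k (B :\ z) f' P'.
Proof.
have [fi fs fB Pp Pd] := sub; have [az bz] := smoothing_ends_neq.
have Pab : P' a b = Q by rewrite /smooth_paths eqxx.
have Pba : P' b a = rev Q by rewrite /smooth_paths xpair_eqE eq_sym (negbTE ab) /= !eqxx.
split.
- move=> x; rewrite /smooth_rel !xpair_eqE fi /= orbF andbC orbb.
  by apply/negP => /andP[/eqP-> /eqP E]; move: ab; rewrite E eqxx.
- move=> x y; rewrite /smooth_rel !xpair_eqE fs orbCA.
  by rewrite [(y == a) && _]andbC [(y == b) && _]andbC [(y != z) && _]andbC.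
- have [_ _ aB bB _] := smoothing_nbrs.
  move=> x y /smooth_relP[[-> _]|[-> _]|[fxy xz _ _ _]]; rewrite !inE ?az ?bz //.
  by rewrite xz (fB _ _ fxy).
- move=> x y /smooth_relP[[-> ->]|[-> ->]|[fxy _ _ -> ->]].
  + by rewrite Pab Pba; split; last exact: merged_branch_path.
  + rewrite Pab Pba revK; split=> //; exact: branch_path_rev se merged_branch_path.
  + have [-> bp] := Pp x y fxy; split=> //; exact: branch_pathW (subsetDl B [set z]) bp.
- move=> x y x' y' /smooth_rel_cases[[E PQ]|[fxy xz yz ->]]
    /smooth_rel_cases[[E' PQ']|[fxy' xz' yz' ->]] ne.
  + by rewrite E E' eqxx in ne.
  + by rewrite (eq_disjoint PQ) merged_disjoint.
  + by rewrite disjoint_sym (eq_disjoint PQ') merged_disjoint.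
  + exact: Pd.
Qed.

Lemma deg_smooth_end : deg_in f' (B :\ z) a = deg_in f B a.
Proof.
have [faz _ _ bB _] := smoothing_nbrs.
have [az bz] := smoothing_ends_neq.
have nbrs : [set v in B :\ z | f' a v] = b |: ([set v in B | f a v] :\ z).
  apply/setP => v; rewrite !inE /smooth_rel !xpair_eqE eqxx (negbTE ab) az /=.
  have [->|vb] := eqVneq v b; first by rewrite bz bB.
  by case: (v != z); rewrite /= ?andbT ?andbF.
rewrite /deg_in nbrs cardsU1 !inE (negbTE nfab) !andbF.
by rewrite [RHS](cardsD1 z) !inE zB faz.
Qed.

Lemma deg_smooth_other u : u \in B :\ z -> u != a -> u != b ->
  deg_in f' (B :\ z) u = deg_in f B u.
Proof.
have [_ fs _ _ _] := sub; have [_ _ _ _ Nz_ab] := smoothing_nbrs.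
move=> /setD1P[uz _] ua ub; rewrite /deg_in; apply: eq_card => v.
rewrite !inE /smooth_rel !xpair_eqE (negbTE ua) (negbTE ub) uz /=.
have [->|vz] := eqVneq v z; last by rewrite andbT.
by apply/esym/negbTE; rewrite negb_and fs; apply/orP; right; apply: contraNN ua;
  move/Nz_ab; rewrite !inE (negbTE ub) orbF.
Qed.

End Smoothing.

Lemma deg_smooth (T : finType) (e : rel T) k B f (P : T -> T -> seq T) (z a b u : T) :
  subdivision e k B f P -> z \in B -> [set v in B | f z v] = [set a; b] -> a != b ->
  ~~ f a b -> u \in B :\ z -> deg_in (smooth_rel f z a b) (B :\ z) u = deg_in f B u.
Proof.
move=> sub zB Nz ab nfab uBz.
have [->|ua] := eqVneq u a; first exact: deg_smooth_end sub zB Nz ab nfab.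
have [->|ub] := eqVneq u b; last exact: (deg_smooth_other (B := B) sub Nz uBz ua ub).
have [_ fs _ _ _] := sub.
have -> : deg_in (smooth_rel f z a b) (B :\ z) b = deg_in (smooth_rel f z b a) (B :\ z) b.
  by apply: eq_card => v; rewrite !inE /smooth_rel orbCA.
apply: deg_smooth_end sub zB _ _ _.
- by rewrite setUC.
- by rewrite eq_sym.
- by rewrite fs.
Qed.

Section Suppression.
Variables (T : finType) (e : rel T) (p : nat) (V : {set T}).
Hypotheses (se : symmetric e) (ie : irreflexive e) (gir : girth_ge e (2 * p - 1))
  (V0 : V != set0) (deg2 : forall x, x \in V -> 1 < deg_in e V x)
  (short_ears : forall x mid y, strict_ear e V x mid y -> (size mid).+1 < p).

(* A subdivision of G[V] obtained by suppressing vertices of degree 2 in G[V];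
   the remaining branch vertices keep their degree in G[V]. *)
Definition partial_suppression (B : {set T}) (f : rel T) (P : T -> T -> seq T) :=
  [/\ B != set0, subdivision e (p - 2) B f P, B \subset V,
      (forall u, u \in B -> deg_in f B u = deg_in e V u) &
      (forall u v, f u v -> {subset P u v <= [set w in V | deg_in e V w == 2]})].

Lemma partial_suppression_init :
  partial_suppression V [rel x y | [&& x \in V, y \in V & e x y]] (fun _ _ => [::]).
Proof.
split=> //.
- split=> // [x|x y|x y /and3P[]//|x y /and3P[_ _ exy]|].
  + by rewrite /= ie !andbF.
  + by rewrite /= se andbCA.
  + split=> //; split; rewrite /= ?exy ?andbT ?disjoint_has //.
    by rewrite inE; apply: contraTneq exy => ->; rewrite ie.
  + by move=> *; rewrite disjoint_has.
- move=> u uV; apply: eq_card => v; rewrite !inE /= uV.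
  by case: (v \in V).
Qed.

Lemma subdivision_of_suppression B f P : partial_suppression B f P ->
  (forall u, u \in B -> deg_in f B u != 2) -> has_subdivision_mindeg3 e (p - 2).
Proof.
move=> [B0 sub BV degB _] not2; apply/has_subdivisionP; exists B, f, P; split=> // u uB.
by rewrite ltn_neqAle eq_sym not2 // degB // deg2 // (subsetP BV).
Qed.

Lemma suppression_step B f P z : partial_suppression B f P -> z \in B ->
  deg_in f B z = 2 -> exists B' f' P', partial_suppression B' f' P' /\ #|B'| < #|B|.
Proof.
move=> [B0 sub BV degB inner] zB dz; have [_ fs _ Pp _] := sub.
have /cards2P[a [b [ab Nz]]] : #|[set v in B | f z v]| == 2 by apply/eqP.
have [faz fzb aB bB _] := smoothing_nbrs sub Nz.
have [az bz] := smoothing_ends_neq sub Nz.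
pose Q := merged_path P z a b.
have Q_inner : {subset Q <= [set w in V | deg_in e V w == 2]}.
  move=> w; rewrite mem_cat inE => /or3P[wP|/eqP->|wP].
  - exact: inner a z faz w wP.
  - by rewrite inE (subsetP BV) // -degB // dz.
  - exact: inner z b fzb w wP.
have Q_ear : strict_ear e V a Q b.
  split; split; rewrite ?(subsetP BV) //.
  - by apply/allP => w /Q_inner; rewrite inE => /andP[].
  - exact: merged_uniq sub Nz ab.
  - exact: path_merged sub Nz.
  - by apply/allP => w /Q_inner; rewrite inE => /andP[].
have Q_short : size Q <= p - 2.
  by move: (size Q) (short_ears Q_ear) => n; clear -n p; lia.
have nfab : ~~ f a b.
  (* otherwise Q and the branch path of ab form a cycle of length <= 2p - 2 *)
  apply/negP => fab; have fba : f b a by rewrite fs.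
  have [_ [Sba Uba Pba _]] := Pp b a fba.
  have Q_pos : 0 < size Q by rewrite /Q /merged_path size_cat addnS.
  have := girth_two_paths gir (merged_uniq sub Nz ab) Uba
    (merged_disjoint sub zB Nz fba bz az) (path_merged sub Nz) Pba.
  rewrite -/Q; move: (size Q) (size (P b a)) Q_pos Q_short Sba => m n.
  by clear -m n p; lia.
exists (B :\ z), (smooth_rel f z a b), (smooth_paths P z a b); split; last first.
  by rewrite [#|B|](cardsD1 z) zB.
split.
- by apply/set0Pn; exists a; rewrite !inE az.
- exact: smooth_subdivision.
- exact: subset_trans (subsetDl _ _) BV.
- by move=> u uBz; rewrite (deg_smooth sub) // degB //; case/setD1P: uBz.
- move=> x y /(smooth_rel_cases sub ab nfab)[[_ PQ]|[fxy _ _ ->]] w; last exact: inner x y fxy w.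
  by rewrite PQ; exact: Q_inner.
Qed.

Lemma suppression_subdivision : has_subdivision_mindeg3 e (p - 2).
Proof.
suff: forall n (B : {set T}) f P, #|B| <= n -> partial_suppression B f P ->
    exists B f P, partial_suppression B f P /\ forall u, u \in B -> deg_in f B u != 2.
  move=> /(_ _ _ _ _ (leqnn _) partial_suppression_init)[B [f [P [inv not2]]]].
  exact: subdivision_of_suppression inv not2.
elim=> [|n IH] B f P Bn inv.
  by case: inv => B0; move: Bn; rewrite leqn0 cards_eq0 (negbTE B0).
case: (pickP [pred z in B | deg_in f B z == 2]) => [z /andP[zB /eqP dz]|none].
  have [B' [f' [P' [inv' lt]]]] := suppression_step inv zB dz.
  by apply: IH inv'; rewrite -ltnS (leq_trans lt Bn).
by exists B, f, P; split=> // u uB; have := none u; rewrite /= uB /= => ->.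
Qed.

End Suppression.

Section Reduction.
Variables (T : finType) (e : rel T) (p : nat).
Hypothesis p2 : 2 <= p.

Definition irreducible (V : {set T}) := forall V', ~ p_reduction e p V V'.

Lemma p_reduction_card V V' : p_reduction e p V V' -> #|V'| < #|V|.
Proof.
case=> [x xV _ | x [|m mid] y [[_ _ midV] _] long_ear].
- by rewrite [#|V|](cardsD1 x) xV.
- by move: long_ear; rewrite leqNgt p2.
- rewrite proper_card // properE subsetDl; apply/subsetPn; exists m.
  + by case/andP: midV.
  + by rewrite !inE eqxx.
Qed.

Lemma reduces_or_irreducible V :
  reduces_to_empty e p V \/ exists2 V0 : {set T}, V0 != set0 & irreducible V0.
Proof.
elim: {V}_.+1 {-2}V (ltnSn #|V|) => // n IH V Vn.
have [->|V0] := eqVneq V set0; first by left; exact: rte_nil.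
have [[V' red]|irr] := classic (exists V', p_reduction e p V V'); last first.
  by right; exists V => // V' red; apply: irr; exists V'.
have [|red'|] := IH V'; last by right.
- exact: leq_trans (p_reduction_card red) _.
- by left; exact: rte_step red red'.
Qed.

Lemma irreducible_deg V x : irreducible V -> x \in V -> 1 < deg_in e V x.
Proof. by move=> irr xV; rewrite ltnNge; apply/negP => /(red_low_deg p xV)/irr. Qed.

Lemma irreducible_short_ears V x mid y :
  irreducible V -> strict_ear e V x mid y -> (size mid).+1 < p.
Proof. by move=> irr E; rewrite ltnNge; apply/negP => /(red_ear E)/irr. Qed.

End Reduction.

Theorem mainTheorem5 (T : finType) (e : rel T) (p : nat) :
  simple_graph e -> 2 <= p -> girth_ge e (2 * p - 1) ->
  (path_degenerate e p <-> ~ has_subdivision_mindeg3 e (p - 2)).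
Proof.
move=> [ie se] p2 gir; split.
- move=> deg /has_subdivisionP[B [f [P [B0 sub deg3]]]].
  have short_paths : (p - 2).+1 < p by move: p2; clear; lia.
  apply: (not_reduces_to_empty se sub deg3 short_paths deg _ B0).
  by move=> h _; rewrite inE.
- move=> no_sub; have [//|[V V0 irr]] := reduces_or_irreducible e p2 [set: T].
  case: no_sub; apply: (suppression_subdivision se ie gir V0).
  + by move=> x; apply: irreducible_deg.
  + by move=> x mid y; apply: irreducible_short_ears.
Qed.
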